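(* Let $D$ be a Dyck path of semilength $n$ with row-area sequence $(r_0,r_1,\dots,r_n)$ and column-area sequence $(c_1,\dots,c_{n+1})$, and let $\mathcal F=\{k\in\{1,\dots,n\}: r_{k+1+c_{k+1}}=r_{k-1}+c_{k+1}+2\}$. Let $\pi$ be the permutation associated with $D$ by the Billey–Jockusch–Stanley bijection. Then $k\in\mathcal F$ if and only if $\pi(k)=k$.
   Context: Work in an $n\times n$ array of unit cells; the cell $(i,j)$ is the one in column $i$ (columns numbered $1,\dots,n$ from left to right) and row $j$ (rows numbered $1,\dots,n$ from bottom to top), i.e. the square $[i-1,i]\times[j-1,j]$. A Dyck path of semilength $n$ is a lattice path from $(0,0)$ to $(n,n)$ with unit north and east steps that never goes below the line $y=x$. Row-area sequence: $r_0=-1$ and, for $1\le k\le n$, $r_k$ is the number of full cells in row $k$ strictly between the $k$-th north step of $D$ and the diagonal; equivalently, if the $k$-th north step lies on the vertical line $x=x_k$, then $r_k=k-1-x_k$. Column-area sequence: for $1\le k\le n$, $c_k$ is the number of full cells in column $k$ strictly between the $k$-th east step and the diagonal; equivalently, if the $k$-th east step lies at height $y_k$, then $c_k=y_k-k$; and $c_{n+1}=-1$ (so $1\le k+1+c_{k+1}\le n$ for all $1\le k\le n$). A valley of $D$ is an east step immediately followed by a north step; if the east step is the $k$-th east step and the north step is the $\ell$-th north step, the valley is at position $(k,\ell)$, the cell enclosed by these two steps. Billey–Jockusch–Stanley bijection: put a cross in every valley cell of $D$; then, for the columns $i=1,2,\dots,n$ in this order, if column $i$ does not yet contain a cross, put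 a cross in the lowest cell of column $i$ whose row does not yet contain a cross. The crosses form a permutation matrix, and $\pi(i)$ is the row of the cross in column $i$. *)

From mathcomp Require Import all_boot all_order all_algebra.
Set Implicit Arguments. Unset Strict Implicit. Unset Printing Implicit Defensive.
Import GRing.Theory Num.Theory.

(* A lattice path is a sequence of steps: true = north step, false = east step. *)

Definition dyck (n : nat) (s : seq bool) : Prop :=
  [/\ size s = (n + n)%N, count id s = n &
      forall i, i <= size s -> count negb (take i s) <= count id (take i s)].

(* Number of steps of kind ~~b before the k-th (1-based) step of kind b. *)
Fixpoint opp_before (b : bool) (k : nat) (s : seq bool) : nat :=
  match s with
  | [::] => 0
  | c :: s' => if c == b then (if k <= 1 then 0 else opp_before b k.-1 s')
               else (opp_before b k s').+1
  end.

(* x_k : abscissa of the vertical line carrying the k-th north step. *)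
Definition xN (s : seq bool) (k : nat) : nat := opp_before true k s.
(* y_k : height of the k-th east step. *)
Definition yE (s : seq bool) (k : nat) : nat := opp_before false k s.

Definition row_area (s : seq bool) (k : nat) : int :=
  if k == 0%N then (-1)%R else (k%:Z - 1 - (xN s k)%:Z)%R.

Definition col_area (s : seq bool) (n k : nat) : int :=
  if k == n.+1 then (-1)%R else ((yE s k)%:Z - k%:Z)%R.

(* Valleys: an east step (the k-th) immediately followed by a north step
   (the l-th); recorded as the cell (k, l). *)
Definition valleys (s : seq bool) : seq (nat * nat) :=
  [seq (count negb (take i.+1 s), count id (take i.+2 s)) |
     i <- iota 0 (size s).-1 & (~~ nth true s i) && nth false s i.+1].

Definition valley_row (s : seq bool) (i : nat) : option nat :=
  ohead [seq p.2 | p <- valleys s & p.1 == i].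

(* Greedy step of the Billey-Jockusch-Stanley construction: process the
   columns in cols in order; a column with a valley keeps its valley cross,
   otherwise a cross is put in the lowest row (among 1..n) not yet
   containing a cross. *)
Fixpoint bjs_fill (s : seq bool) (n : nat) (cols : seq nat) (used : seq nat)
  : seq (nat * nat) :=
  match cols with
  | [::] => [::]
  | i :: cs =>
    match valley_row s i with
    | Some l => (i, l) :: bjs_fill s n cs used
    | None =>
      let r := head 0%N [seq j <- iota 1 n | j \notin used] in
      (i, r) :: bjs_fill s n cs (r :: used)
    end
  end.

Definition bjs_crosses (s : seq bool) (n : nat) : seq (nat * nat) :=
  bjs_fill s n (iota 1 n) [seq p.2 | p <- valleys s].

Definition bjs_perm (s : seq bool) (n : nat) (i : nat) : nat :=
  head 0%N [seq p.2 | p <- bjs_crosses s n & p.1 == i].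

From mathcomp Require Import all_boot all_order all_algebra zify.
Import GRing.Theory Num.Theory.

(* Say that a valley cell (a, b) straddles k when a <= k <= b; both sides of
   the equivalence say that no valley straddles k.
   With y := y_{k+1} = k + 1 + c_{k+1}, the area condition simplifies to
   x_y = x_{k-1}, i.e. no east step lies at a height h with k - 1 <= h < y.
   From such an east step, the first north step that follows it before the
   (k+1)-th east step closes a valley straddling k; conversely the east step of
   a straddling valley is such a step.
   On the permutation side, a column k without valley receives the (t+1)-th row
   free of valley crosses, t being the number of such columns before k.  Since
   every valley cell lies strictly above the diagonal, the numbers of free
   columns and free rows before k differ exactly by the number of valleys
   (a, b) with a < k <= b, so pi(k) = k iff no valley straddles k. *)

Lemma opp_beforeE b m s : 0 < m ->
  opp_before b m s = count (fun i => (nth b s i != b) &&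
     (count (pred1 b) (take i s) < m)) (iota 0 (size s)).
Proof.
elim: s m => [|c s IH] m m_gt0 //=.
rewrite -[1]/(1 + 0) iotaDl count_map /=.
case: eqP => [->|/eqP/negbTE cb] /=.
- case: ifP => [m_le1|m_gt1].
  + rewrite (eq_count (a2 := pred0)) ?count_pred0 // => i /=.
    by rewrite eqxx /= add0n; apply/negbTE; lia.
  + rewrite IH; last by lia.
    by apply: eq_count => i /=; rewrite eqxx /= add0n; apply/idP/idP; lia.
- rewrite addn0 m_gt0 add1n IH //; congr _.+1.
  by apply: eq_count => i /=; rewrite cb add0n.
Qed.

Lemma count_nth_iota {T : Type} (x0 : T) (P : pred T) (s : seq T) m :
  m <= size s -> count (fun i => P (nth x0 s i)) (iota 0 m) = count P (take m s).
Proof. by move=> hm; rewrite -(map_nth_iota0 x0 hm) count_map. Qed.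

Lemma count_split_pred {T : Type} (a b : pred T) l :
  count a l = count (predI a b) l + count (predI a (predC b)) l.
Proof.
by elim: l => //= x l ->; case: (a x); case: (b x); rewrite /= ?addSn ?addnS.
Qed.

Lemma count_ltn_split {T : Type} (a : pred T) (f : T -> nat) l {m1 m2} : m1 <= m2 ->
  count (fun x => a x && (f x < m2)) l =
  count (fun x => a x && (f x < m1)) l + count (fun x => a x && (m1 <= f x < m2)) l.
Proof.
move=> le_m12; elim: l => [|x l IH] //=; rewrite IH.
case: (a x) => //=; case: (ltnP (f x) m1) => [lt1|le1] /=.
- by rewrite (leq_trans lt1 le_m12) add1n.
- by rewrite add0n addnCA.
Qed.

Lemma count_mem_comm (T : eqType) (X Y : seq T) : uniq X -> uniq Y ->
  count (mem X) Y = count (mem Y) X.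
Proof.
move=> uX uY; rewrite -!size_filter; apply/perm_size/uniq_perm.
- exact: filter_uniq.
- exact: filter_uniq.
- by move=> x; rewrite !mem_filter andbC.
Qed.

Lemma iota1_split {m k} : 0 < k <= m -> iota 1 m = iota 1 k.-1 ++ k :: iota k.+1 (m - k).
Proof.
case/andP=> k_gt0 le_km; rewrite -{1}(subnKC (leq_trans (leq_pred k) le_km)) iotaD.
have -> : m - k.-1 = (m - k).+1 by lia.
by rewrite add1n prednK.
Qed.

Lemma nth_filter_iota1 (P : pred nat) m k t : 0 < k <= m ->
  (nth 0 [seq j <- iota 1 m | P j] t == k) = P k && (t == count P (iota 1 k.-1)).
Proof.
move=> hk; set F := [seq j <- iota 1 m | P j].
have uF : uniq F by exact/filter_uniq/iota_uniq.
have k_gt0 : 0 < k by case/andP: hk.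
case Pk: (P k) => /=.
- have kF : k \in F by rewrite mem_filter Pk mem_iota add1n ltnS k_gt0 /=; case/andP: hk.
  have -> : count P (iota 1 k.-1) = index k F.
    by rewrite /F (iota1_split hk) filter_cat index_cat mem_filter mem_iota
      add1n prednK // ltnn andbF /= Pk /= eqxx addn0 size_filter.
  case: (ltnP t (size F)) => lt_tF; first by rewrite -{1}(nth_index 0 kF) nth_uniq ?index_mem.
  rewrite nth_default // eq_sym (gtn_eqF k_gt0); apply/esym/negbTE.
  by rewrite neq_ltn (leq_trans _ lt_tF) ?orbT // index_mem.
- apply/negbTE/eqP => nth_k; case: (ltnP t (size F)) => lt_tF.
    by have := mem_nth 0 lt_tF; rewrite nth_k mem_filter Pk.
  by move: nth_k; rewrite nth_default // => k0; rewrite -k0 in k_gt0.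
Qed.

Lemma count_notin_iota1 (X : seq nat) m : uniq X -> {in X, forall x, 0 < x} ->
  count (fun j => j \notin X) (iota 1 m) + count (fun x => x < m.+1) X = m.
Proof.
move=> uX X_gt0; have -> : count (fun x => x < m.+1) X = count (mem X) (iota 1 m).
  rewrite count_mem_comm ?iota_uniq //; apply: eq_in_count => x /X_gt0 x_gt0.
  by rewrite -[RHS]/(x \in iota 1 m) mem_iota x_gt0 add1n.
by rewrite addnC (count_predC (mem X)) size_iota.
Qed.

Section Path.
Variable s : seq bool.
Local Notation step i := (nth false s i).

Definition north_count i := count id (take i s).
Definition east_count i := count negb (take i s).

Lemma north_countS i : i < size s -> north_count i.+1 = north_count i + step i.
Proof. by move=> lt_is; rewrite /north_count (take_nth false lt_is) -cats1 count_cat /= addn0. Qed.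

Lemma east_countS i : i < size s -> east_count i.+1 = east_count i + ~~ step i.
Proof. by move=> lt_is; rewrite /east_count (take_nth false lt_is) -cats1 count_cat /= addn0. Qed.

Lemma north_count_homo : {homo north_count : i j / i <= j}.
Proof.
move=> i j le_ij.
by rewrite /north_count -[take j s](cat_take_drop i) take_takel // count_cat leq_addr.
Qed.

Lemma east_count_homo : {homo east_count : i j / i <= j}.
Proof.
move=> i j le_ij.
by rewrite /east_count -[take j s](cat_take_drop i) take_takel // count_cat leq_addr.
Qed.

Lemma north_countD_east i : i <= size s -> north_count i + east_count i = i.
Proof. by move=> le_is; rewrite -{3}(size_takel le_is) -(count_predC id). Qed.

Lemma north_count_ltS i j : i <= j < size s -> step j -> north_count i < north_count j.+1.
Proof.
case/andP=> le_ij lt_js sj; rewrite north_countS // sj addn1 ltnS.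
exact: north_count_homo.
Qed.

Lemma east_count_ltS i j : i <= j < size s -> ~~ step j -> east_count i < east_count j.+1.
Proof.
case/andP=> le_ij lt_js sj; rewrite east_countS // sj addn1 ltnS.
exact: east_count_homo.
Qed.

Definition east_below m :=
  count (fun i => ~~ step i && (north_count i < m)) (iota 0 (size s)).
Definition north_left m :=
  count (fun i => step i && (east_count i < m)) (iota 0 (size s)).

Lemma xNE m : 0 < m -> xN s m = east_below m.
Proof.
move=> m_gt0; rewrite /xN opp_beforeE //; apply: eq_in_count => i.
rewrite mem_iota add0n => /andP[_ lt_is].
rewrite (set_nth_default false true lt_is) /north_count.
by congr (_ && (_ < _)); [case: (step i) | apply: eq_count => -[]].
Qed.

Lemma yEE m : 0 < m -> yE s m = north_left m.
Proof.
move=> m_gt0; rewrite /yE opp_beforeE //; apply: eq_in_count => i _.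
by congr (_ && (_ < _)); [case: (step i) | apply: eq_count => -[]].
Qed.

Lemma row_areaE m : row_area s m = (m%:Z - 1 - (east_below m)%:Z)%R.
Proof.
case: m => [|m]; last by rewrite /row_area xNE.
rewrite /row_area /east_below (eq_count (a2 := pred0)) ?count_pred0 //.
by move=> i; rewrite ltn0 andbF.
Qed.

Lemma north_count_le_north_left q m :
  q <= size s -> east_count q <= m -> north_count q <= north_left m.+1.
Proof.
move=> le_qs le_qm; rewrite /north_count -(count_nth_iota false) // /north_left.
rewrite -(subnKC le_qs) iotaD count_cat -[X in X <= _]addn0 leq_add //.
apply/eq_leq; apply: eq_in_count => p; rewrite mem_iota add0n => /andP[_ lt_pq].
by rewrite ltnS (leq_trans (east_count_homo _ _ (ltnW lt_pq)) le_qm) andbT.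
Qed.

Lemma north_left_gt q m : q <= size s -> north_count q < north_left m ->
  exists2 p, q <= p < size s & step p && (east_count p < m).
Proof.
move=> le_qs; rewrite /north_left -(subnKC le_qs) iotaD count_cat add0n => lt_q.
have le_head : count (fun i => step i && (east_count i < m)) (iota 0 q) <= north_count q.
  by rewrite /north_count -(count_nth_iota false) //; apply: sub_count => p /andP[].
have : has (fun i => step i && (east_count i < m)) (iota q (size s - q)).
  by rewrite has_count; lia.
case/hasP=> p; rewrite mem_iota subnKC // => q_p hp; by exists p.
Qed.

Definition is_valley i := ~~ step i && step i.+1.
Definition valley_steps := [seq i <- iota 0 (size s).-1 | is_valley i].
Definition valley_cell i := (east_count i.+1, north_count i.+2).

Lemma mem_valley_steps i : (i \in valley_steps) = (i.+1 < size s) && is_valley i.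
Proof. by rewrite mem_filter mem_iota add0n ltn_predRL andbC. Qed.

Lemma valleysE : valleys s = map valley_cell valley_steps.
Proof.
congr map; apply: eq_in_filter => i; rewrite mem_iota add0n ltn_predRL => /andP[_ lt_is].
by rewrite (set_nth_default false true (ltnW lt_is)).
Qed.

Definition valley_cols := map fst (valleys s).
Definition valley_rows := map snd (valleys s).

Lemma uniq_valley_cols : uniq valley_cols.
Proof.
rewrite /valley_cols valleysE -map_comp map_inj_in_uniq ?filter_uniq ?iota_uniq //.
apply/incn_inj_in/leq_mono_in => i j _; rewrite mem_valley_steps => /andP[lt_js /andP[ej _]] lt_ij.
by apply: east_count_ltS => //; rewrite lt_ij ltnW.
Qed.

Lemma uniq_valley_rows : uniq valley_rows.
Proof.
rewrite /valley_rows valleysE -map_comp map_inj_in_uniq ?filter_uniq ?iota_uniq //.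
apply/incn_inj_in/leq_mono_in => i j _; rewrite mem_valley_steps => /andP[lt_js /andP[_ ej]] lt_ij.
by apply: north_count_ltS => //; rewrite ltnS lt_ij.
Qed.

Lemma exists_valley_between i p : i < p < size s -> ~~ step i -> step p ->
  exists2 j, i <= j < p & is_valley j.
Proof.
elim: p => [|p IH] //; rewrite ltnS => /andP[le_ip lt_ps] ei sp.
case: (eqVneq i p) => [eq_ip|ne_ip]; first by exists i; rewrite ?leqnn // /is_valley ei eq_ip.
case sp': (step p).
- have [|j /andP[le_ij lt_jp] vj] := IH _ ei sp'.
    by rewrite ltn_neqAle ne_ip le_ip ltnW.
  by exists j; rewrite // le_ij ltnW.
- by exists p; [rewrite le_ip ltnSn | rewrite /is_valley sp' sp].
Qed.

Definition straddled k := has (fun v : nat * nat => v.1 <= k <= v.2) (valleys s).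

Lemma east_between_straddled k :
  has (fun i => ~~ step i && (k.-1 <= north_count i < north_left k.+1)) (iota 0 (size s))
  = straddled k.
Proof.
rewrite /straddled valleysE has_map; apply/hasP/hasP => -[i].
- rewrite mem_iota => /andP[_ lt_is] /and3P[ei le_k lt_left].
  have [|p /andP[lt_ip lt_ps] /andP[sp lt_pk]] := @north_left_gt i.+1 k.+1 lt_is.
    by rewrite north_countS // (negbTE ei) addn0.
  have [|j /andP[le_ij lt_jp] /andP[ej sj1]] := @exists_valley_between i p _ ei sp.
    by rewrite lt_ip lt_ps.
  have lt_js : j.+1 < size s by rewrite (leq_ltn_trans lt_jp).
  exists j; first by rewrite mem_valley_steps lt_js /is_valley ej.
  apply/andP; split=> /=; first exact: leq_trans (east_count_homo _ _ lt_jp) lt_pk.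
  rewrite (north_countS _ lt_js) sj1 addn1 -add1n -leq_subLR subn1 (leq_trans le_k) //.
  exact: north_count_homo _ _ (leqW le_ij).
- rewrite mem_valley_steps => /andP[lt_is /andP[ei si1]] /andP[le_k k_le].
  have north_i2 : north_count i.+2 = (north_count i).+1.
    by rewrite (north_countS _ lt_is) si1 (north_countS _ (ltnW lt_is)) (negbTE ei) addn0 addn1.
  have east_i2 : east_count i.+2 = east_count i.+1.
    by rewrite (east_countS _ lt_is) si1 addn0.
  exists i; first by rewrite mem_iota leq0n (ltnW lt_is).
  rewrite ei /= -north_i2; apply/andP; split.
    by rewrite -subn1 leq_subLR add1n -north_i2.
  by apply: north_count_le_north_left; rewrite ?east_i2.
Qed.

Lemma valley_row_None c : (valley_row s c == None) = (c \notin valley_cols).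
Proof.
rewrite /valley_row /valley_cols; elim: (valleys s) => [|v V IH] //=.
by rewrite in_cons; case: (eqVneq v.1 c) => [<-|].
Qed.

Lemma valley_row_Some c l : valley_row s c = Some l -> (c, l) \in valleys s.
Proof.
rewrite /valley_row; elim: (valleys s) => [|v V IH] //=.
case: (eqVneq v.1 c) => [<- [<-]|_ /IH V_cl]; rewrite in_cons ?V_cl ?orbT //.
by rewrite -surjective_pairing eqxx.
Qed.

Section DyckPath.
Variable n : nat.

Hypothesis D : dyck n s.

Lemma east_count_le_north i : i <= size s -> east_count i <= north_count i.
Proof. by case: D => _ _; apply. Qed.

Lemma east_count_le i : east_count i <= n.
Proof.
case: D => size_s count_north _.
have count_east : count negb s = n.
  by apply/eqP; rewrite -(eqn_add2l n) -{1}count_north (count_predC id) size_s.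
by rewrite -count_east /east_count -{2}(cat_take_drop i s) count_cat leq_addr.
Qed.

Lemma north_left_last : north_left n.+1 = n.
Proof.
transitivity (count id (take (size s) s)); last by rewrite take_size; case: D.
rewrite -(count_nth_iota false) //; apply: eq_count => i.
by rewrite ltnS east_count_le andbT.
Qed.

Lemma col_areaE k : k <= n -> col_area s n k.+1 = ((north_left k.+1)%:Z - k.+1%:Z)%R.
Proof.
rewrite /col_area yEE //; case: eqP => [[->]|//] _.
by rewrite north_left_last -addn1 PoszD opprD addrA subrr add0r.
Qed.

Lemma north_left_ge k : k <= n -> k <= north_left k.+1.
Proof.
move=> le_kn; have le_2k : k + k <= size s by case: D => -> _ _; rewrite leq_add.
have le_EN := east_count_le_north _ le_2k; have sum_NE := north_countD_east _ le_2k.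
apply: leq_trans (north_count_le_north_left _ _ le_2k _); lia.
Qed.

Lemma valley_cell_lt v : v \in valleys s -> 0 < v.1 < v.2.
Proof.
rewrite valleysE => /mapP[i]; rewrite mem_valley_steps => /andP[lt_is /andP[ei si1]] ->.
rewrite /= (north_countS _ lt_is) si1 addn1 ltnS east_count_le_north ?andbT; last exact: ltnW lt_is.
by rewrite (east_countS _ (ltnW lt_is)) ei addn1.
Qed.

Lemma east_below_eq k : 0 < k <= n ->
  east_below (north_left k.+1) = east_below k.-1 <-> ~~ straddled k.
Proof.
case/andP=> _ le_kn.
have le_k1 : k.-1 <= north_left k.+1 := leq_trans (leq_pred k) (north_left_ge _ le_kn).
rewrite -east_between_straddled has_count -leqNgt leqn0 /east_below.
rewrite (count_ltn_split _ _ _ le_k1) -{2}[count _ _]addn0.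
by split=> [/eqP|/eqP ->]; rewrite ?eqn_add2l.
Qed.

Definition free_rows := [seq j <- iota 1 n | j \notin valley_rows].

Lemma bjs_fill_lookup cols used m c :
  [seq j <- iota 1 n | j \notin used] = drop m free_rows -> c \in cols -> uniq cols ->
  head 0 [seq v.2 | v <- bjs_fill s n cols used & v.1 == c] =
  if valley_row s c is Some l then l
  else nth 0 free_rows (m + count (fun c' => valley_row s c' == None) (take (index c cols) cols)).
Proof.
have uF : uniq free_rows by exact/filter_uniq/iota_uniq.
elim: cols used m => [|i cols IH] used m //= free_used.
rewrite in_cons => /orP[/eqP->|c_cols] /andP[i_cols u_cols].
  rewrite eqxx take0 addn0; case: (valley_row s i) => [l|] /=; first by rewrite eqxx.
  by rewrite eqxx /= free_used -nth0 nth_drop addn0.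
have ne_ic : (i == c) = false by apply: contraNF i_cols => /eqP->.
rewrite ne_ic /=; case vi: (valley_row s i) => [l|] /=.
  by rewrite ne_ic /= (IH used m).
rewrite ne_ic /= (IH _ m.+1) //; first by rewrite addSnnS.
set r := head 0 _.
have -> : [seq j <- iota 1 n | j \notin r :: used] =
          [seq j <- [seq j <- iota 1 n | j \notin used] | j != r].
  by rewrite -filter_predI; apply: eq_filter => j /=; rewrite in_cons negb_or andbC.
rewrite /r free_used; have := drop_uniq m uF.
case E: (drop m free_rows) => [|x t] /= u_xt; first by rewrite -[m.+1]add1n -drop_drop E.
rewrite eqxx /= -[m.+1]add1n -drop_drop E /= drop0; apply/all_filterP/allP => y y_t.
by apply: contraTneq y_t => ->; case/andP: u_xt.
Qed.

Lemma bjs_permE k : 0 < k <= n -> bjs_perm s n k =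
  if valley_row s k is Some l then l
  else nth 0 free_rows (count (fun c => valley_row s c == None) (iota 1 k.-1)).
Proof.
move=> hk; have k_gt0 : 0 < k by case/andP: hk.
rewrite /bjs_perm /bjs_crosses (@bjs_fill_lookup _ _ 0) ?drop0 ?iota_uniq //.
  rewrite add0n (iota1_split hk) index_cat mem_iota add1n prednK // ltnn andbF.
  by rewrite /= eqxx addn0 take_size_cat // size_iota.
by rewrite mem_iota add1n ltnS.
Qed.


Lemma count_free_cols k : 0 < k ->
  count (fun c => valley_row s c == None) (iota 1 k.-1)
  + count (fun v => v.1 < k) (valleys s) = k.-1.
Proof.
move=> k_gt0; rewrite (eq_count valley_row_None) -(count_map fst (fun c => c < k)).
rewrite -{2}(prednK k_gt0) count_notin_iota1 ?uniq_valley_cols //.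
by move=> c /mapP[v /valley_cell_lt /andP[c_gt0 _] ->].
Qed.

Lemma count_free_rows k : 0 < k ->
  count (fun j => j \notin valley_rows) (iota 1 k.-1)
  + count (fun v => v.2 < k) (valleys s) = k.-1.
Proof.
move=> k_gt0; rewrite -(count_map snd (fun r => r < k)).
rewrite -{2}(prednK k_gt0) count_notin_iota1 ?uniq_valley_rows //.
move=> r /mapP[v /valley_cell_lt /andP[c_gt0 lt_cr] ->].
exact: leq_trans c_gt0 (ltnW lt_cr).
Qed.

Lemma count_valleys_col_lt k : count (fun v => v.1 < k) (valleys s) =
  count (fun v => v.2 < k) (valleys s) + count (fun v => v.1 < k <= v.2) (valleys s).
Proof.
rewrite (count_split_pred _ (fun v => v.2 < k)).
congr (_ + _); apply: eq_in_count => v /valley_cell_lt /andP[_ lt_cr] /=.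
  by apply/andP/idP => [[]//|lt_rk]; rewrite (ltn_trans lt_cr lt_rk).
by rewrite -leqNgt.
Qed.

Lemma straddled_free_col k : k \notin valley_cols ->
  straddled k = has (fun v => v.1 < k <= v.2) (valleys s).
Proof.
move=> k_cols; apply: eq_in_has => v v_in /=.
case: (eqVneq v.1 k) => [e|ne]; last by rewrite leq_eqVlt (negbTE ne).
by move: k_cols; rewrite -e (map_f fst v_in).
Qed.

Lemma bjs_perm_fixed k : 0 < k <= n -> bjs_perm s n k = k <-> ~~ straddled k.
Proof.
move=> hk; have k_gt0 : 0 < k by case/andP: hk.
rewrite bjs_permE //; case vk: (valley_row s k) => [l|].
  have /valley_cell_lt/andP[_ lt_kl] := valley_row_Some _ _ vk.
  split=> [e|/hasPn/(_ _ (valley_row_Some _ _ vk))]; first by rewrite e ltnn in lt_kl.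
  by rewrite /= leqnn ltnW.
have k_cols : k \notin valley_cols by rewrite -valley_row_None vk.
rewrite straddled_free_col // has_count -leqNgt leqn0 (rwP eqP) nth_filter_iota1 //.
set t := count _ (iota 1 k.-1); set r := count _ (iota 1 k.-1).
set B := count (fun v => v.1 < k <= v.2) (valleys s).
have t_r : t + B = r.
  move: (count_free_cols _ k_gt0) (count_free_rows _ k_gt0).
  by rewrite count_valleys_col_lt -/t -/r -/B; lia.
have rows_B : k \in valley_rows -> 0 < B.
  case/mapP=> v v_in ek; rewrite -has_count; apply/hasP; exists v => //.
  by have := valley_cell_lt _ v_in; rewrite ek leqnn andbT => /andP[].
split=> [/andP[_ /eqP t_eq]|/eqP B0].
  by rewrite -(eqn_add2l t) addn0 t_r t_eq.
rewrite -t_r B0 addn0 eqxx andbT; apply/negP => /rows_B.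
by rewrite B0.
Qed.

End DyckPath.
End Path.

Theorem mainTheorem4 (n : nat) (s : seq bool) :
  dyck n s ->
  forall k : nat, (1 <= k <= n)%N ->
    (row_area s `|(k.+1%:Z + col_area s n k.+1)%R|%N
       = (row_area s k.-1 + col_area s n k.+1 + 2)%R
     <-> bjs_perm s n k = k).
Proof.
move=> D k hk; have [_ le_kn] := andP hk.
rewrite bjs_perm_fixed // -(@east_below_eq s n) // col_areaE // addrC subrK.
rewrite !row_areaE /=; split=> [|->]; lia.
Qed.
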